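(* Let $L/K$ be a nontrivial finite extension inside $\bar K$, $G={\rm Gal}(\tilde L/K)$, $H={\rm Gal}(\tilde L/L)$. Let $N=\tilde L^{N_G(H)}$ (the unique intermediate field with $L/N$ Galois of degree $r_K(L)$) and $F=\tilde L^{H^G}$ (the unique Galois subextension of $L/K$ of maximum degree). Then: (1) $N_G(H)=G$ iff $r_K(L)=[L:K]$ iff $t_K(L)=[L:K]$ iff $H^G=H$; (2) $H\trianglelefteq H^G$ iff $H^G\subseteq N_G(H)$ iff $N\subseteq F$; (3) if $N_G(H)\trianglelefteq G$ then $H^G\subseteq N_G(H)$; (4) if $H^G=N_G(H)$ then $N_G(H)$ is a proper normal subgroup of $G$ and $H$ is a proper normal subgroup of $H^G$; (5) $H^G=N_G(H)$ iff $N=F$ iff the unique descending chain of $L/K$ is $L\supsetneq N\supsetneq K$, the unique ascending chain of $L/K$ is $K\subsetneq F\subsetneq L$, and these two chains coincide. In this case $r_K(L)\,t_K(L)=[L:K]$ and $t_K(L)=s_K(L)$.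
   Context: $K$ is a perfect field with a fixed algebraic closure $\bar K$; all extensions finite inside $\bar K$; $\tilde L$ is the Galois closure of $L/K$. Cluster size: for $L=K(\alpha)$ with minimal polynomial $f$, $r_K(L)$ is the number of roots of $f$ in $L$ ($=|{\rm Aut}(L/K)|$), and $s_K(L)=[L:K]/r_K(L)$. $H^G$ is the normal closure of $H$ in $G$. Ascending index: $t_K(L)=[F:K]$ where $F$ is the unique subfield of $L$ Galois over $K$ of maximum degree. The unique descending chain of $L/K$ is $L=N_0\supsetneq N_1\supsetneq\cdots\supsetneq N_k$ where each $N_i$ is the unique intermediate field of $N_{i-1}/K$ with $N_{i-1}/N_i$ Galois of degree $r_K(N_{i-1})$, stopping at the first $N_k$ with $r_K(N_k)=1$. The unique ascending chain of $L/K$ is $K=F_0\subsetneq F_1\subsetneq\cdots\subsetneq F_k$ where each $F_i$ is the unique subfield of $L$ Galois over $F_{i-1}$ of maximum degree, stopping at the first $F_k$ with $t_{F_k}(L)=1$. *)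

From HB Require Import structures.
From mathcomp Require Import all_boot all_order all_algebra all_fingroup all_solvable all_field.
From Stdlib Require Import ClassicalEpsilon.
Set Implicit Arguments. Unset Strict Implicit. Unset Printing Implicit Defensive.
Import GRing.Theory.

(* Ambient setting: Omega is a finite normal extension of a base field F0;
   all fields considered are subfields of Omega (a substitute for \bar K,
   large enough to contain the Galois closure of L/K). *)

Section Defs.
Variables (F0 : fieldType) (Om : splittingFieldType F0).

Definition pbool (P : Prop) : bool :=
  if excluded_middle_informative P then true else false.

Definition galois_closure (K L : {subfield Om}) : {subfield Om} :=
  \big[@prodv_aspace _ Om/1%AS]_(g in 'Gal({:Om} / K)%g)
     aimg_aspace (gal_repr g) L.

(* cluster size r_K(L) = |Aut(L/K)| *)
Definition cluster_size (K L : {vspace Om}) : nat := #|'Gal(L / K)%g|.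

Definition cluster_number (K L : {vspace Om}) : nat :=
  \dim_K L %/ cluster_size K L.

Definition ascending_index (K L : {subfield Om}) : nat :=
  \max_(n < (\dim_K L).+1 |
     pbool (exists F : {subfield Om},
              [/\ galois K F, (F <= L)%VS & \dim_K F = n])) n.

Definition descending_chain (K L : {subfield Om}) (s : seq {subfield Om}) : Prop :=
  exists k, [/\ size s = k.+1, nth L s 0 = L,
    (forall i, i < k ->
       let A := nth L s i in let B := nth L s i.+1 in
       [/\ (K <= B)%VS, (B <= A)%VS, galois B A,
           \dim_B A = cluster_size K A & cluster_size K A != 1])
    & cluster_size K (nth L s k) = 1].

Definition ascending_chain (K L : {subfield Om}) (s : seq {subfield Om}) : Prop :=
  exists k, [/\ size s = k.+1, nth K s 0 = K,
    (forall i, i < k ->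
       let A := nth K s i in let B := nth K s i.+1 in
       [/\ (A <= B)%VS, (B <= L)%VS, galois A B,
           \dim_A B = ascending_index A L & ascending_index A L != 1])
    & ascending_index (nth K s k) L = 1].

End Defs.

From HB Require Import structures.
From mathcomp Require Import all_boot all_order all_algebra all_fingroup all_solvable all_field.
From Stdlib Require Import ClassicalEpsilon.
Set Implicit Arguments. Unset Strict Implicit. Unset Printing Implicit Defensive.

(* Everything happens inside G = Gal(Lt/K), where the Galois correspondence
   sends H to L, 'N_G(H) to N and the normal closure H^G to F.  Restricting
   the elements of 'N_G(H) to L gives Aut(L/K) = 'N_G(H)/H, so
   r = |'N_G(H) : H|, while n = |G : H| and t = |G : H^G|.  All five items
   are then statements about the chains H <= 'N_G(H) <= G and H <= H^G <= G. *)

Section NormalClosure.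
Variables (gT : finGroupType) (G H : {group gT}).
Hypothesis sHG : H \subset G.
Local Open Scope group_scope.
Local Notation HG := <<class_support H G>>%g.

Lemma sub_normal_closure : H \subset HG.
Proof. exact: subset_trans (sub_class_support _ _) (subset_gen _). Qed.

Lemma normal_closure_sub : HG \subset G.
Proof. by rewrite gen_subG class_support_subG. Qed.

Lemma normal_closure_normal : HG <| G.
Proof. by rewrite /normal normal_closure_sub norms_gen ?class_support_norm. Qed.

Lemma normal_closure_min (M : {group gT}) :
  H \subset M -> G \subset 'N(M) -> HG \subset M.
Proof. by move=> sHM nMG; rewrite gen_subG class_support_sub_norm. Qed.

Lemma normal_closure_idP : reflect (HG = H) (H <| G).
Proof.
apply: (iffP idP) => [nsHG | eqH]; last by rewrite -eqH normal_closure_normal.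
apply/eqP; rewrite eqEsubset sub_normal_closure andbT.
by rewrite normal_closure_min ?normal_norm.
Qed.

Lemma subnorm_idP : reflect ('N_G(H) = G) (H <| G).
Proof. by rewrite /normal sHG; apply: setIidPl. Qed.

Lemma subnorm_eqG_normal_closure_id : 'N_G(H) = G <-> HG = H.
Proof. by split=> [/subnorm_idP/normal_closure_idP | /normal_closure_idP/subnorm_idP]. Qed.

Lemma normal_in_normal_closure : (H <| HG) = (HG \subset 'N_G(H)).
Proof. by rewrite /normal sub_normal_closure subsetI normal_closure_sub. Qed.

Lemma normal_closure_sub_subnorm : 'N_G(H) <| G -> HG \subset 'N_G(H).
Proof.
by case/andP=> _; apply: normal_closure_min; rewrite subsetI sHG normG.
Qed.

Lemma normal_closure_eq_subnorm :
    H \proper G -> HG = 'N_G(H) ->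
  [/\ 'N_G(H) \proper G, 'N_G(H) <| G, H \proper HG & H <| HG].
Proof.
move=> ltHG eqHG.
have ltNG : 'N_G(H) \proper G.
  rewrite properEneq subsetIl andbT; apply/eqP => eqNG.
  have /normal_closure_idP eqH : H <| G by apply/subnorm_idP.
  by move: ltHG; rewrite -eqH eqHG eqNG properxx.
split=> //; last by rewrite normal_in_normal_closure eqHG.
- by rewrite -eqHG normal_closure_normal.
rewrite properEneq sub_normal_closure andbT; apply/eqP => eqH.
have /subnorm_idP eqNG : H <| G by rewrite eqH normal_closure_normal.
by move: ltNG; rewrite eqNG properxx.
Qed.

End NormalClosure.

Lemma eq_indexSg (gT : finGroupType) (G H M : {group gT}) :
  H \subset M -> M \subset G -> #|M : H|%g = #|G : H|%g <-> M :=: G.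
Proof.
move=> sHM sMG; rewrite -(Lagrange_index sMG sHM).
split=> [eqMG | ->]; last by rewrite indexgg mul1n.
apply/eqP; rewrite eqEsubset sMG -indexg_eq1.
by rewrite -(eqn_pmul2r (indexg_gt0 M H)) mul1n -eqMG eqxx.
Qed.

Lemma eq_indexgS (gT : finGroupType) (G H M : {group gT}) :
  H \subset M -> M \subset G -> #|G : M|%g = #|G : H|%g <-> M :=: H.
Proof.
move=> sHM sMG; rewrite -(Lagrange_index sMG sHM).
split=> [eqMH | ->]; last by rewrite indexgg muln1.
apply/eqP; rewrite eqEsubset sHM andbT -indexg_eq1.
by rewrite -(eqn_pmul2l (indexg_gt0 G M)) muln1 -eqMH eqxx.
Qed.

Section GaloisCorrespondence.
Variables (F0 : fieldType) (Om : splittingFieldType F0) (E : {subfield Om}).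

Lemma sub_fixedField (A B : {group gal_of E}) :
  (fixedField A <= fixedField B)%VS = (B \subset A).
Proof.
apply/idP/idP=> [sAB | /fixedFieldS //].
by rewrite -(gal_fixedField A) -(gal_fixedField B) galS.
Qed.

Lemma eq_fixedField (A B : {group gal_of E}) :
  (fixedField A == fixedField B) = (A == B :> {set gal_of E}).
Proof. by rewrite eqEsubset eqEsubv !sub_fixedField andbC. Qed.

End GaloisCorrespondence.

Section GaloisClosure.
Variables (F0 : fieldType) (Om : splittingFieldType F0) (K L : {subfield Om}).
Local Notation Lt := (galois_closure K L).

Lemma galois_closureE : (Lt : {vspace Om}) =
  (\big[@prodv _ Om/1%VS]_(g in 'Gal({:Om} / K)%g) (g @: L))%VS.
Proof.
by rewrite /galois_closure (big_morph (@asval _ _) (fun _ _ => erefl) (erefl _)).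
Qed.

Lemma conj_sub_galois_closure g : g \in 'Gal({:Om} / K)%g -> (g @: L <= Lt)%VS.
Proof.
move=> Gg; rewrite galois_closureE (bigD1 g) //= -{1}[(g @: L)%VS]prodv1.
apply: prodvSr; apply: (big_ind (fun V : {vspace Om} => (1 <= V)%VS)) => //.
  by move=> U V sU sV; rewrite -[1%VS]prodv1 prodvS.
by move=> h _; rewrite -(aimg1 (gal_repr h)) limgS ?sub1v.
Qed.

Lemma sub_galois_closure : (L <= Lt)%VS.
Proof.
have := conj_sub_galois_closure (group1 _).
by rewrite (etrans (eq_in_limg _) (lim1g _)) // => a _; rewrite lfunE /= gal_id.
Qed.

(* Every K-automorphism of Om permutes the conjugates g(L), hence maps Lt into itself. *)
Lemma galois_closure_galois : galois K {:Om} -> (K <= L)%VS -> galois K Lt.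
Proof.
move=> /and3P[_ sepK _] sKL; have sKLt := subv_trans sKL sub_galois_closure.
rewrite /galois sKLt (separableSr (subvf _) sepK) /=.
apply/forall_inP => f; rewrite inE kAutfE => homKf.
have Gf : gal {:Om} f \in 'Gal({:Om} / K)%g.
  by rewrite gal_kAut ?subvf // kAutfE (kHom_eq (subvf _) (galK _)) ?subvf.
have fLt : (f @: Lt <= Lt)%VS.
  rewrite /galois_closure.
  apply: (big_ind (fun V : {aspace Om} => (f @: V <= Lt)%VS)) => /=.
  - by rewrite aimg1 sub1v.
  - by move=> U V fU fV; rewrite aimgM prodv_sub.
  move=> g Gg; rewrite -limg_comp.
  have -> : ((f \o gal_repr g)%VF @: L = gal_repr (g * gal {:Om} f)%g @: L)%VS.
    by apply: eq_in_limg => a _; rewrite lfunE /= galM ?memvf // galK ?subvf ?memvf.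
  exact: conj_sub_galois_closure (groupM Gg Gf).
by rewrite eqEdim fLt (kHom_dim (kHomSr (subvf Lt) homKf)) leqnn.
Qed.

End GaloisClosure.

Section Restriction.
Variables (F0 : fieldType) (Om : splittingFieldType F0) (K L E : {subfield Om}).
Hypotheses (galKE : galois K E) (sKL : (K <= L)%VS) (sLE : (L <= E)%VS).
Local Open Scope group_scope.
Local Notation G := 'Gal(E / K)%G.
Local Notation H := 'Gal(E / L)%G.
Local Notation NH := 'N_G(H)%g.

Let sKE : (K <= E)%VS := subv_trans sKL sLE.

Lemma mem_norm_gal x : x \in G -> (x \in 'N(H)) = (x @: L == L)%VS.
Proof.
move=> Gx; set M := aimg_aspace x L.
have sKM : (K <= M)%VS.
  by apply/subvP => a Ka; rewrite /= -(fixed_gal sKE Gx Ka) memv_img ?(subvP sKL).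
have sME : (M <= E)%VS by rewrite /= -{2}(limg_gal x) limgS.
have galME : galois M E by apply: galoisS galKE; rewrite sKM.
have galLE : galois L E by apply: galoisS galKE; rewrite sKL.
apply/normP/eqP => [eqH | eqM]; last by rewrite gal_conjg eqM.
move: (gal_conjg L x); rewrite eqH => eqG.
by rewrite -(galois_fixedField galME) /= -eqG (galois_fixedField galLE).
Qed.

Definition gal_restrict (x : gal_of E) : gal_of L := gal L x.

Lemma gal_restrictE x : x \in NH -> {in L, gal_restrict x =1 x}.
Proof.
case/setIP=> Gx; rewrite mem_norm_gal // => /eqP xL a La.
by apply: galK; rewrite ?xL.
Qed.

Lemma gal_restrictM : {in NH &, {morph gal_restrict : x y / (x * y)%g}}.
Proof.
move=> x y Nx Ny /=; apply/eqP/gal_eqP => a La.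
have Ea := subvP sLE a La.
rewrite gal_restrictE ?groupM // !galM // !gal_restrictE //.
by case/setIP: Nx => Gx; rewrite mem_norm_gal // => /eqP <-; rewrite memv_img.
Qed.
Canonical gal_restrict_morphism := Morphism gal_restrictM.

Lemma ker_gal_restrict : 'ker gal_restrict_morphism = H.
Proof.
have sHN : H \subset NH by rewrite subsetI galS ?normG.
apply/setP => x; apply/idP/idP => [kerx | Hx].
  have Nx := dom_ker kerx; rewrite gal_kHom //; apply/kAHomP => a La.
  by rewrite -gal_restrictE // (mker kerx) gal_id.
have Nx := subsetP sHN x Hx; apply/kerP => //; apply/eqP/gal_eqP => a La.
by rewrite gal_restrictE // gal_id (fixed_gal sLE Hx).
Qed.

(* Surjectivity: E/K is normal, so every K-automorphism of L extends to E. *)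
Lemma im_gal_restrict : gal_restrict_morphism @* NH = 'Gal(L / K).
Proof.
apply/setP => y; apply/idP/idP => [/morphimP[x Nx _ ->] | Ky].
  have Gx : x \in G by case/setIP: Nx.
  rewrite gal_kHom //; apply/kAHomP => a Ka.
  by rewrite /= gal_restrictE ?(subvP sKL) // (fixed_gal sKE Gx).
have /and3P[_ _ nKE] := galKE.
have sKLE : (K <= L <= E)%VS by rewrite sKL sLE.
have homKLy : kHom K L y by rewrite -gal_kHom.
have [x Gx xE] := kHom_to_gal sKLE nKE homKLy.
have Nx : x \in NH.
  rewrite inE Gx mem_norm_gal // -(eq_in_limg xE).
  by have /andP[_ ->] : kAut K L y by rewrite -gal_kAut.
apply/morphimP; exists x => //; apply/eqP/gal_eqP => a La.
by rewrite /= gal_restrictE // xE.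
Qed.

Lemma card_gal_subnorm : #|'Gal(L / K)| = #|NH : H|.
Proof.
by rewrite -im_gal_restrict card_morphim setIid ker_gal_restrict.
Qed.

End Restriction.

Lemma pboolP (P : Prop) : pbool P <-> P.
Proof. by rewrite /pbool; case: excluded_middle_informative. Qed.

Section Chains.
Variables (F0 : fieldType) (Om : splittingFieldType F0).

Lemma galois_refl (M : {subfield Om}) : galois M M.
Proof.
rewrite /galois subvv separable_refl; apply/forall_inP => f.
rewrite inE kAutfE => homf.
by rewrite (etrans (eq_in_limg _) (lim1g _)) // => a Ma; rewrite lfunE /= (kAHomP homf).
Qed.

Lemma dim_over_refl (A : {subfield Om}) : \dim_A A = 1.
Proof. by rewrite divnn adim_gt0. Qed.

Lemma dim_over_eq1 (A B : {subfield Om}) :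
  (A <= B)%VS -> (\dim_A B == 1) = (A == B).
Proof.
move=> sAB; apply/eqP/eqP => [dim1 | <-]; last exact: dim_over_refl.
by apply/val_inj/eqP; rewrite eqEdim sAB (dim_sup_field sAB) dim1 mul1n /=.
Qed.

Lemma cluster_size_galois (A B : {subfield Om}) :
  galois A B -> cluster_size A B = \dim_A B.
Proof. by move/galois_dim. Qed.

Lemma ascending_indexE (K L E : {subfield Om}) :
    galois K E -> (E <= L)%VS ->
    (forall M : {subfield Om}, galois K M -> (M <= L)%VS -> \dim_K M <= \dim_K E) ->
  ascending_index K L = \dim_K E.
Proof.
move=> galE sEL maxE; apply/eqP; rewrite eqn_leq; apply/andP; split.
  by apply/bigmax_leqP => i /pboolP[M [galM sML <-]]; apply: maxE.
have ltEL : \dim_K E < (\dim_K L).+1 by rewrite ltnS leq_div2r // dimvS.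
by apply: (leq_bigmax_cond (Ordinal ltEL)); apply/pboolP; exists E.
Qed.

Lemma ascending_index_galois (A B : {subfield Om}) :
  galois A B -> ascending_index A B = \dim_A B.
Proof. by move=> galAB; apply: ascending_indexE => // M _ sMB; rewrite leq_div2r ?dimvS. Qed.

Lemma descending_chain_galois_tower (K N L : {subfield Om}) :
    (K <= N)%VS -> (N <= L)%VS -> galois K N -> galois N L ->
    \dim_N L = cluster_size K L -> N != L -> N != K ->
  descending_chain K L [:: L; N; K].
Proof.
move=> sKN sNL galKN galNL dimNL neNL neNK; exists 2; split=> //.
  case=> [|[|//]] _ /=; split=> //.
  - by rewrite -dimNL dim_over_eq1.
  - by rewrite cluster_size_galois.
  - by rewrite cluster_size_galois // dim_over_eq1 // eq_sym.
by rewrite /= cluster_size_galois ?galois_refl ?dim_over_refl.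
Qed.

Lemma ascending_chain_galois_tower (K F L : {subfield Om}) :
    (K <= F)%VS -> (F <= L)%VS -> galois K F -> galois F L ->
    \dim_K F = ascending_index K L -> K != F -> F != L ->
  ascending_chain K L [:: K; F; L].
Proof.
move=> sKF sFL galKF galFL dimKF neKF neFL; exists 2; split=> //.
  case=> [|[|//]] _ /=; split=> //.
  - by rewrite -dimKF dim_over_eq1.
  - by rewrite ascending_index_galois.
  - by rewrite ascending_index_galois // dim_over_eq1.
by rewrite /= ascending_index_galois ?galois_refl ?dim_over_refl.
Qed.

End Chains.

Section Proposition.
Variables (F0 : fieldType) (Om : splittingFieldType F0) (K L : {subfield Om}).
Hypotheses (galOm : galois K {:Om}) (sKL : (K <= L)%VS).
Local Open Scope group_scope.
Local Notation Lt := (galois_closure K L).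
Local Notation G := 'Gal(Lt / K)%G.
Local Notation H := 'Gal(Lt / L)%G.
Local Notation NH := 'N_G(H)%g.
Local Notation HG := <<class_support H G>>%g.
Local Notation N := (fixedField_aspace NH).
Local Notation F := (fixedField_aspace HG).

Let galKLt : galois K Lt := galois_closure_galois galOm sKL.
Let sLLt : (L <= Lt)%VS := sub_galois_closure K L.
Let galLLt : galois L Lt := galoisS (introT andP (conj sKL sLLt)) galKLt.
Let sHG : H \subset G := galS Lt sKL.
Let fixH : fixedField H = L := galois_fixedField galLLt.
Let fixG : fixedField G = K := galois_fixedField galKLt.

Lemma gal_closure_proper : L != K -> H \proper G.
Proof.
move=> neLK; rewrite properEneq sHG andbT.
by apply: contra neLK => eqHG; rewrite -val_eqE /= -fixH -fixG eq_fixedField.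
Qed.

Lemma dim_gal_closure_index : \dim_K L = #|G : H|.
Proof. by rewrite -(dim_fixed_galois galKLt sHG) fixH. Qed.

Lemma cluster_size_gal_closure_index : cluster_size K L = #|NH : H|.
Proof. exact: card_gal_subnorm galKLt sKL sLLt. Qed.

Lemma fixed_subnorm_sub : (K <= N)%VS /\ (N <= L)%VS.
Proof.
split; first by rewrite -[X in (X <= _)%VS]fixG /= sub_fixedField subsetIl.
by rewrite -[X in (_ <= X)%VS]fixH /= sub_fixedField subsetI sHG normG.
Qed.

Lemma galois_fixed_subnorm : galois N L.
Proof.
have nsHN : H <| 'Gal(Lt / N)%G by rewrite /= gal_fixedField normalSG.
by have := normal_fixedField_galois (fixedField_galois NH) nsHN; rewrite fixH.
Qed.

Lemma dim_fixed_subnorm : \dim_N L = cluster_size K L.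
Proof.
have sHN : H \subset 'Gal(Lt / N)%G by rewrite /= gal_fixedField subsetI sHG normG.
rewrite cluster_size_gal_closure_index.
by have := dim_fixed_galois (fixedField_galois NH) sHN; rewrite fixH gal_fixedField.
Qed.

Lemma fixed_normal_closure_sub : (K <= F)%VS /\ (F <= L)%VS.
Proof.
split; first by rewrite -[X in (X <= _)%VS]fixG /= sub_fixedField normal_closure_sub.
by rewrite -[X in (_ <= X)%VS]fixH /= sub_fixedField sub_normal_closure.
Qed.

Lemma galois_fixed_normal_closure : galois K F.
Proof. by have := normal_fixedField_galois galKLt (normal_closure_normal sHG). Qed.

Lemma dim_fixed_normal_closure : \dim_K F = #|G : HG|.
Proof. exact: dim_fixed_galois galKLt (normal_closure_sub sHG). Qed.

(* A Galois subextension M of L/K is fixed by a normal subgroup of G containing H,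
   hence by H^G, so M <= F. *)
Lemma ascending_index_fixed_normal_closure : ascending_index K L = \dim_K F.
Proof.
apply: ascending_indexE galois_fixed_normal_closure _ _.
  by case: fixed_normal_closure_sub.
move=> M galKM sML; rewrite leq_div2r // dimvS //.
have /and3P[sKM _ nKM] := galKM.
have galMLt : galois M Lt by apply: galoisS galKLt; rewrite sKM (subv_trans sML).
have nsMG : 'Gal(Lt / M) <| G by apply: normalField_normal; rewrite // sKM (subv_trans sML).
rewrite -(galois_fixedField galMLt) /= sub_fixedField normal_closure_min //.
  exact: galS.
exact: normal_norm.
Qed.

Lemma ascending_index_gal_closure_index : ascending_index K L = #|G : HG|.
Proof. by rewrite ascending_index_fixed_normal_closure dim_fixed_normal_closure. Qed.

Lemma subnorm_eqG_cluster_size : NH = G <-> cluster_size K L = \dim_K L.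
Proof.
rewrite cluster_size_gal_closure_index dim_gal_closure_index; apply: iff_sym.
by apply: eq_indexSg; rewrite ?subsetIl // subsetI sHG normG.
Qed.

Lemma ascending_index_normal_closure_id : ascending_index K L = \dim_K L <-> HG = H.
Proof.
rewrite ascending_index_gal_closure_index dim_gal_closure_index.
by apply: eq_indexgS; rewrite ?sub_normal_closure ?normal_closure_sub.
Qed.

Lemma normal_closure_eq_subnorm_fixed : HG = NH <-> N = F.
Proof.
split=> [-> // | /(congr1 val) /= /eqP eqNF].
by apply/esym/eqP; rewrite -(eq_fixedField NH%G HG%G).
Qed.

Lemma cluster_size_mul_ascending_index :
  HG = NH -> (cluster_size K L * ascending_index K L)%N = \dim_K L.
Proof.
move=> eqHG; rewrite cluster_size_gal_closure_index ascending_index_gal_closure_index.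
rewrite eqHG dim_gal_closure_index mulnC Lagrange_index ?subsetIl //.
by rewrite subsetI sHG normG.
Qed.

Lemma ascending_index_eq_cluster_number :
  HG = NH -> ascending_index K L = cluster_number K L.
Proof.
move=> eqHG; rewrite /cluster_number -(cluster_size_mul_ascending_index eqHG) mulKn //.
by rewrite cluster_size_gal_closure_index indexg_gt0.
Qed.

Lemma fixed_subnorm_chains : L != K -> N = F ->
  [/\ [/\ descending_chain K L [:: L; N; K], L != N & N != K],
      [/\ ascending_chain K L [:: K; F; L], K != F & F != L]
    & N = F].
Proof.
move=> neLK eqNF; have /normal_closure_eq_subnorm_fixed eqHG := eqNF.
have [ltNG _ ltHHG _] := normal_closure_eq_subnorm sHG (gal_closure_proper neLK) eqHG.
have neNL : N != L.
  apply: contraTneq ltHHG => /(congr1 val) /= /eqP.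
  rewrite -[X in _ == X]fixH eq_fixedField => /eqP eqNH.
  by rewrite eqHG eqNH properxx.
have neNK : N != K.
  apply: contraTneq ltNG => /(congr1 val) /= /eqP.
  rewrite -[X in _ == X]fixG eq_fixedField => /eqP eqNG.
  by rewrite eqNG properxx.
have [sKN sNL] := fixed_subnorm_sub.
have galKN : galois K N by rewrite eqNF galois_fixed_normal_closure.
have galNL := galois_fixed_subnorm.
have dimKN : \dim_K N = ascending_index K L.
  by rewrite eqNF ascending_index_fixed_normal_closure.
have desc : descending_chain K L [:: L; N; K].
  by apply: descending_chain_galois_tower; rewrite ?dim_fixed_subnorm.
have asc : ascending_chain K L [:: K; N; L].
  by apply: ascending_chain_galois_tower; rewrite // eq_sym.
by rewrite -eqNF (eq_sym L) (eq_sym K) neNL neNK; do !split.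
Qed.

End Proposition.

Unset Implicit Arguments.

Theorem proposition7p6 (F0 : fieldType) (Om : splittingFieldType F0)
    (K L : {subfield Om}) :
  galois K {:Om} -> (K <= L)%VS -> L != K ->
  let Lt := galois_closure K L in
  let G := 'Gal(Lt / K)%G in
  let H := 'Gal(Lt / L)%G in
  let NH := 'N_G(H)%g in
  let HG := <<class_support H G>>%g in
  let N := fixedField_aspace NH in
  let F := fixedField_aspace HG in
  let n := \dim_K L in
  let r := cluster_size K L in
  let s := cluster_number K L in
  let t := ascending_index K L in
  (* (1) *)
  [/\ (NH = G <-> r = n), (r = n <-> t = n) & (t = n <-> HG = H)] /\
  (* (2) *)
  [/\ ((H <| HG)%g <-> HG \subset NH) & (HG \subset NH <-> (N <= F)%VS)] /\
  (* (3) *)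
  ((NH <| G)%g -> HG \subset NH) /\
  (* (4) *)
  (HG = NH -> [/\ NH \proper G, (NH <| G)%g, H \proper HG & (H <| HG)%g]) /\
  (* (5) *)
  [/\ (HG = NH <-> N = F),
      (N = F <->
         [/\ [/\ descending_chain K L [:: L; N; K], L != N & N != K],
             [/\ ascending_chain K L [:: K; F; L], K != F & F != L]
           & N = F])
    & (HG = NH -> r * t = n /\ t = s)].
Proof.
move=> galOm sKL neLK; cbv zeta.
have ltHG := gal_closure_proper galOm sKL neLK.
have sHG := proper_sub ltHG.
have rE := subnorm_eqG_cluster_size galOm sKL.
have tE := ascending_index_normal_closure_id galOm sKL.
split; [|split; [|split; [|split]]].
- split; [exact: rE | | exact: tE].
  by rewrite -rE tE; apply: subnorm_eqG_normal_closure_id.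
- by split; rewrite ?normal_in_normal_closure ?sub_fixedField.
- exact: normal_closure_sub_subnorm.
- exact: normal_closure_eq_subnorm.
split; first exact: normal_closure_eq_subnorm_fixed.
- by split=> [|[] //]; apply: fixed_subnorm_chains.
- move=> eqHG; split; first exact: cluster_size_mul_ascending_index.
  exact: ascending_index_eq_cluster_number.
Qed.
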